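(* Let $m\ge2$, let $D=\mathrm{diag}(d_1,\dots,d_m)$ with $d_1<d_2<\dots<d_m$, let $\beta_1,\beta_2$ be nonzero reals and $\mathbf v_1,\mathbf v_2\in\mathbb R^m$, and suppose $\{1,\dots,m\}$ is partitioned into sets $J_1,J_2,J_3$ such that $\mathbf v_1$ vanishes on $J_3$ and $\mathbf v_2$ vanishes on $J_1$. Let $M=D+\beta_1\mathbf v_1\mathbf v_1^T+\beta_2\mathbf v_2\mathbf v_2^T$ and assume no $d_i$ is an eigenvalue of $M$. Then for every $j\in\{1,\dots,m-1\}$ and $k\in\{1,\dots,m-j\}$, the number of eigenvalues of $M$ (counted with multiplicity) in $I_{j,j+k}$ is at least $k-1$ and at most $k+1$. In particular each interval $(d_j,d_{j+1})$ contains at most two eigenvalues of $M$.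
   Context: $I_{j,j+k}:=\bigcup_{i=j}^{j+k-1}(d_i,d_{i+1})=(d_j,d_{j+k})\setminus\{d_{j+1},\dots,d_{j+k-1}\}$. *)

From HB Require Import structures.
From mathcomp Require Import all_boot all_order all_algebra.
Set Implicit Arguments. Unset Strict Implicit. Unset Printing Implicit Defensive.
Import Order.TTheory GRing.Theory Num.Theory.
Local Open Scope ring_scope.

(* Indices are 0-based: the paper's d_{i+1} is [d 0 i] for i : 'I_m.
   [in_I d j k x] means x lies in the paper's I_{j+1, j+1+k}, i.e. in the
   union of the open intervals (d_i, d_{i+1}) for j <= i < j + k (0-based). *)
Definition in_I (R : realFieldType) (m : nat) (d : 'rV[R]_m) (j k : nat) (x : R)
  : bool :=
  [exists i : 'I_m, [exists i' : 'I_m,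
     [&& (val i' == (val i).+1)%N, (j <= val i)%N, (val i < j + k)%N,
         d 0 i < x & x < d 0 i']]].

From HB Require Import structures.
From mathcomp Require Import all_boot all_order all_algebra.
From mathcomp Require Import sesquilinear spectral complex zify.

(* A
   min-max argument comparing the Hermitian forms on the whole space and on the
   hyperplane orthogonal to w shows that adding beta w w^T changes the number of
   eigenvalues below a threshold t (and the number at most t) by at most one: it
   can only increase it when beta < 0 and only decrease it when beta > 0.  Two
   updates of D thus shift these counts by at most q = #{i | beta_i < 0} upwards
   and p = #{i | beta_i > 0} downwards, with p + q = 2.  The eigenvalues in
   (d_j, d_{j+k}) are those below d_{j+k} minus those at most d_j; as none equals
   a d_i, both the strict and the non-strict bounds apply at each end, which
   yields k - 1 and k + 1. *)

Set Implicit Arguments. Unset Strict Implicit. Unset Printing Implicit Defensive.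
Import Order.TTheory GRing.Theory Num.Theory.
Local Open Scope ring_scope.
Local Open Scope sesquilinear_scope.

Lemma mxrank_cap3_eq0 (F : fieldType) n p q r
    (A : 'M[F]_(p, n)) (B : 'M_(q, n)) (D : 'M_(r, n)) :
  (A :&: B :&: D = 0)%MS -> (\rank A + \rank B + \rank D <= n + n)%N.
Proof.
move=> ABD0.
have := mxrank_sum_cap A B; have := mxrank_sum_cap (A :&: B)%MS D.
rewrite ABD0 mxrank0.
have := rank_leq_col (A + B)%MS; have := rank_leq_col (A :&: B + D)%MS.
lia.
Qed.

Section HermitianForms.
Variable C : numClosedFieldType.

Definition hform n (A : 'M[C]_n) (x : 'rV[C]_n) : C := (x *m A *m x ^t*) 0 0.

Definition nlt_row n (a : 'rV[C]_n) (t : C) := #|[set i | a 0 i < t]|.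
Definition nle_row n (a : 'rV[C]_n) (t : C) := #|[set i | a 0 i <= t]|.

Lemma trCmulmx_unitary n (P : 'M[C]_n) : P \is unitarymx -> P ^t* *m P = 1%:M.
Proof. by rewrite -trmxC_unitary => /unitarymxP; rewrite trmxCK. Qed.

Lemma hformD n (A B : 'M[C]_n) x : hform (A + B) x = hform A x + hform B x.
Proof. by rewrite /hform mulmxDr mulmxDl mxE. Qed.

Lemma hformN n (A : 'M[C]_n) x : hform (- A) x = - hform A x.
Proof. by rewrite /hform mulmxN mulNmx mxE. Qed.

Lemma hform_rank1 n (beta : C) (w : 'cV[C]_n) x :
  hform (beta *: (w *m w ^t*)) x = beta * ((x *m w) 0 0 * ((x *m w) 0 0)^*).
Proof.
rewrite /hform -scalemxAr -scalemxAl mxE; congr (_ * _).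
rewrite !mulmxA -[x *m w *m _ *m _]mulmxA -map_mxM -trmx_mul mxE big_ord1.
by rewrite [X in _ * X]mxE [(_ ^T) _ _]mxE.
Qed.

Lemma hform_unitary_diag n (P : 'M[C]_n) (a : 'rV[C]_n) x :
  P \is unitarymx -> let y := x *m P ^t* in
  hform (P ^t* *m diag_mx a *m P) x = \sum_i a 0 i * (y 0 i * (y 0 i)^*).
Proof.
move=> PU y; rewrite /hform.
have -> : x *m (P ^t* *m diag_mx a *m P) *m x ^t* = y *m diag_mx a *m y ^t*.
  by rewrite /y trmx_mul map_mxM trmxCK !mulmxA.
rewrite mxE; apply: eq_bigr => i _.
by rewrite mul_mx_diag !mxE mulrCA mulrA.
Qed.

Lemma hform_unitary_diag_sub n (P : 'M[C]_n) (a : 'rV[C]_n) x t :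
  P \is unitarymx -> let y := x *m P ^t* in
  hform (P ^t* *m diag_mx a *m P) x - t * hform 1%:M x =
  \sum_i (a 0 i - t) * (y 0 i * (y 0 i)^*).
Proof.
move=> PU y; have := hform_unitary_diag (const_mx 1) x PU.
rewrite diag_const_mx mulmx1 trCmulmx_unitary // => ->.
rewrite hform_unitary_diag // mulr_sumr -sumrB; apply: eq_bigr => i _.
by rewrite mulrBl [const_mx _ _ _]mxE mul1r.
Qed.

Definition rows_in n (S : {set 'I_n}) (P : 'M[C]_n) : 'M[C]_(#|S|, n) :=
  rowsub (fun i : 'I_#|S| => enum_val i) P.

Lemma rank_rows_in n (S : {set 'I_n}) (P : 'M[C]_n) :
  P \is unitarymx -> \rank (rows_in S P) = #|S|.
Proof.
move=> PU; apply: mxrank_unitary; apply/unitarymxP.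
rewrite /rows_in trmx_mxsub map_mxsub -mxsub_mul (unitarymxP PU).
by apply/matrixP => i j; rewrite !mxE (inj_eq enum_val_inj).
Qed.

Lemma coord_rows_in n (S : {set 'I_n}) (P : 'M[C]_n) (x : 'rV[C]_n) i :
  P \is unitarymx -> (x <= rows_in S P)%MS -> i \notin S -> (x *m P ^t*) 0 i = 0.
Proof.
move=> PU /submxP [y ->] iS; rewrite -mulmxA mul_rowsub_mx (unitarymxP PU).
rewrite mxE big1 // => k _; rewrite !mxE.
by case: eqP => [ki | _]; [move: iS; rewrite -ki enum_valP | rewrite mulr0].
Qed.

Section Sign.
Variables (n : nat) (P : 'M[C]_n) (a : 'rV[C]_n) (t : C).
Hypothesis PU : P \is unitarymx.
Let A := P ^t* *m diag_mx a *m P.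

Lemma hform_sub_lt0 (x : 'rV[C]_n) : x != 0 ->
  (x <= rows_in [set i | (a 0 i < t)%R] P)%MS -> hform A x - t * hform 1%:M x < 0.
Proof.
move=> x0 xS; rewrite hform_unitary_diag_sub //.
set y := x *m P ^t*.
have /existsP [l yl] : [exists l, y 0 l != 0].
  apply: contraNT x0; rewrite negb_exists => /forallP y0.
  have -> : x = y *m P by rewrite mulmxKtV.
  suff -> : y = 0 by rewrite mul0mx.
  by apply/rowP => i; rewrite [RHS]mxE; apply/eqP; have := y0 i; rewrite negbK.
have lS : l \in [set i | a 0 i < t].
  by apply: contraT => lS; rewrite (coord_rows_in PU xS lS) eqxx in yl.
rewrite (bigD1 l) //= -[X in _ < X](addr0 0); apply: ltr_leD.
  by rewrite inE in lS; rewrite nmulr_rlt0 ?mul_conjC_gt0 // subr_lt0.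
apply: sumr_le0 => i _; have [iS | iS] := boolP (i \in [set i | a 0 i < t]).
  by rewrite inE in iS; rewrite nmulr_rle0 ?mul_conjC_ge0 // subr_lt0.
by rewrite (coord_rows_in PU xS iS) mul0r mulr0.
Qed.

Lemma hform_sub_ge0 (x : 'rV[C]_n) :
  (forall i, a 0 i \is Num.real) -> t \is Num.real ->
  (x <= rows_in (~: [set i | (a 0 i < t)%R]) P)%MS ->
  0 <= hform A x - t * hform 1%:M x.
Proof.
move=> a_real t_real xS; rewrite hform_unitary_diag_sub //; apply: sumr_ge0 => i _.
have [iS | iS] := boolP (i \in ~: [set i | a 0 i < t]).
  rewrite !inE -real_leNgt // in iS.
  by rewrite mulr_ge0 ?mul_conjC_ge0 // subr_ge0.
by rewrite (coord_rows_in PU xS iS) mul0r mulr0.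
Qed.

End Sign.

Section MinMax.
Variables (n r : nat) (P Q : 'M[C]_n) (a b : 'rV[C]_n) (K : 'M[C]_(r, n)).
Hypotheses (PU : P \is unitarymx) (QU : Q \is unitarymx)
  (b_real : forall i, b 0 i \is Num.real).
Hypothesis hform_le : forall x, (x <= K)%MS ->
  hform (Q ^t* *m diag_mx b *m Q) x <= hform (P ^t* *m diag_mx a *m P) x.

(* The rows of [P] for entries of [a] below [t], the rows of [Q] for entries of
   [b] at least [t], and [K] meet only in 0: on a common nonzero [x] the form of
   [a] would be [< t |x|^2] and that of [b] would be [>= t |x|^2]. *)
Lemma rank_add_nlt_row t : t \is Num.real ->
  (\rank K + nlt_row a t <= n + nlt_row b t)%N.
Proof.
move=> t_real.
set Sa := [set i | a 0 i < t]; set Sb := [set i | b 0 i < t].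
have cap0 : (rows_in Sa P :&: K :&: rows_in (~: Sb) Q = 0)%MS.
  apply/eqP/rowV0P => x; rewrite !sub_capmx => /andP [/andP [xP xK] xQ].
  apply/eqP/negPn/negP => x0.
  have lt0 := hform_sub_lt0 PU x0 xP.
  have ge0 := hform_sub_ge0 QU b_real t_real xQ.
  have le_sub := lerB (hform_le xK) (lexx (t * hform 1%:M x)).
  by have := le_lt_trans (le_trans ge0 le_sub) lt0; rewrite ltxx.
have rkP : \rank (rows_in Sa P) = #|Sa| by exact: rank_rows_in.
have rkQ : \rank (rows_in (~: Sb) Q) = #|~: Sb| by exact: rank_rows_in.
have := mxrank_cap3_eq0 cap0; have := cardsC Sb.
by rewrite rkP rkQ card_ord /nlt_row -/Sa -/Sb; lia.
Qed.

End MinMax.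

Lemma diag_mx_opp_conj n (P : 'M[C]_n) (a : 'rV[C]_n) :
  P ^t* *m diag_mx (- a) *m P = - (P ^t* *m diag_mx a *m P).
Proof. by rewrite raddfN /= mulmxN mulNmx. Qed.

Lemma nlt_row_opp n (a : 'rV[C]_n) t :
  (forall i, a 0 i \is Num.real) -> t \is Num.real ->
  (nlt_row (- a) (- t) + nle_row a t)%N = n.
Proof.
move=> a_real t_real; rewrite /nlt_row /nle_row.
have -> : [set i | (- a) 0 i < - t] = ~: [set i | a 0 i <= t].
  by apply/setP => i; rewrite !inE mxE ltrN2 real_ltNge.
by rewrite addnC cardsC card_ord.
Qed.

Lemma rank_add_nle_row n r (P Q : 'M[C]_n) (a b : 'rV[C]_n) (K : 'M[C]_(r, n)) t :
  P \is unitarymx -> Q \is unitarymx ->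
  (forall i, a 0 i \is Num.real) -> (forall i, b 0 i \is Num.real) ->
  t \is Num.real ->
  (forall x, (x <= K)%MS ->
     hform (Q ^t* *m diag_mx b *m Q) x <= hform (P ^t* *m diag_mx a *m P) x) ->
  (\rank K + nle_row a t <= n + nle_row b t)%N.
Proof.
move=> PU QU a_real b_real t_real le_ab.
have a'_real i : (- a) 0 i \is Num.real by rewrite mxE rpredN.
have le_ab' x : (x <= K)%MS ->
    hform (P ^t* *m diag_mx (- a) *m P) x <= hform (Q ^t* *m diag_mx (- b) *m Q) x.
  by move=> xK; rewrite !diag_mx_opp_conj !hformN lerN2 le_ab.
have t'_real : - t \is Num.real by rewrite rpredN.
have := rank_add_nlt_row QU PU a'_real le_ab' t'_real.
have := nlt_row_opp a_real t_real; have := nlt_row_opp b_real t_real.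
lia.
Qed.

Lemma hform_rank1_update_ker n (A B : 'M[C]_n) (beta : C) (w : 'cV[C]_n) x :
  B = A + beta *: (w *m w ^t*) -> (x <= kermx w)%MS -> hform B x = hform A x.
Proof.
move=> -> /sub_kermxP xw.
by rewrite hformD hform_rank1 xw mxE mul0r mulr0 addr0.
Qed.

Lemma nlt_row_rank1_update_neg n (P Q : 'M[C]_n) (a b : 'rV[C]_n)
    (w : 'cV[C]_n) (beta t : C) :
  P \is unitarymx -> Q \is unitarymx ->
  (forall i, a 0 i \is Num.real) -> (forall i, b 0 i \is Num.real) ->
  t \is Num.real -> beta < 0 ->
  Q ^t* *m diag_mx b *m Q = P ^t* *m diag_mx a *m P + beta *: (w *m w ^t*) ->
  [/\ (nlt_row a t <= nlt_row b t)%N, (nlt_row b t <= (nlt_row a t).+1)%N,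
      (nle_row a t <= nle_row b t)%N & (nle_row b t <= (nle_row a t).+1)%N].
Proof.
move=> PU QU a_real b_real t_real beta_lt0 upd.
have le_QP x : (x <= 1%:M)%MS ->
    hform (Q ^t* *m diag_mx b *m Q) x <= hform (P ^t* *m diag_mx a *m P) x.
  by move=> _; rewrite upd hformD hform_rank1 gerDl nmulr_rle0 ?mul_conjC_ge0.
have le_PQ x : (x <= kermx w)%MS ->
    hform (P ^t* *m diag_mx a *m P) x <= hform (Q ^t* *m diag_mx b *m Q) x.
  by move=> xw; rewrite (hform_rank1_update_ker upd xw).
have rk_ker : (n <= (\rank (kermx w)).+1)%N.
  by rewrite mxrank_ker; have := rank_leq_col w; lia.
have := rank_add_nlt_row PU QU b_real le_QP t_real.
have := rank_add_nle_row PU QU a_real b_real t_real le_QP.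
have := rank_add_nlt_row QU PU a_real le_PQ t_real.
have := rank_add_nle_row QU PU b_real a_real t_real le_PQ.
rewrite mxrank1; split; lia.
Qed.

Lemma nlt_row_rank1_update n (P Q : 'M[C]_n) (a b : 'rV[C]_n)
    (w : 'cV[C]_n) (beta t : C) :
  P \is unitarymx -> Q \is unitarymx ->
  (forall i, a 0 i \is Num.real) -> (forall i, b 0 i \is Num.real) ->
  t \is Num.real -> beta \is Num.real -> beta != 0 ->
  Q ^t* *m diag_mx b *m Q = P ^t* *m diag_mx a *m P + beta *: (w *m w ^t*) ->
  [/\ (nlt_row b t <= nlt_row a t + (beta < 0)%R)%N,
      (nlt_row a t <= nlt_row b t + (0 < beta)%R)%N,
      (nle_row b t <= nle_row a t + (beta < 0)%R)%N &
      (nle_row a t <= nle_row b t + (0 < beta)%R)%N].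
Proof.
move=> PU QU a_real b_real t_real beta_real beta0 upd.
have [beta_lt0 | beta_gt0] : beta < 0 \/ 0 < beta.
  by move: beta0; rewrite real_neqr_lt // => /orP [] ->; [left | right].
- have [] := nlt_row_rank1_update_neg PU QU a_real b_real t_real beta_lt0 upd.
  by rewrite beta_lt0 (lt_gtF beta_lt0); split; lia.
- have upd' : P ^t* *m diag_mx a *m P =
      Q ^t* *m diag_mx b *m Q + (- beta) *: (w *m w ^t*).
    by rewrite upd scaleNr addrK.
  have [] := nlt_row_rank1_update_neg QU PU b_real a_real t_real _ upd'.
    by rewrite oppr_lt0.
  by rewrite beta_gt0 (lt_gtF beta_gt0); split; lia.
Qed.

End HermitianForms.

Lemma char_poly_similar (F : fieldType) n (P Pi D : 'M[F]_n) :
  Pi *m P = 1%:M -> char_poly (Pi *m D *m P) = char_poly D.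
Proof.
move=> PiP; rewrite /char_poly /char_poly_mx.
have -> : 'X%:M - map_mx polyC (Pi *m D *m P) =
    map_mx polyC Pi *m ('X%:M - map_mx polyC D) *m map_mx polyC P.
  rewrite mulmxBr mulmxBl !map_mxM; congr (_ - _).
  rewrite scalar_mxC -mulmxA mul_scalar_mx scalemxAr.
  by rewrite -scalemxAr -map_mxM PiP map_mx1 scalemx1.
rewrite !det_mulmx mulrC mulrA -det_mulmx -map_mxM.
by rewrite (mulmx1C PiP) map_mx1 det1 mul1r.
Qed.

Section RealSymmetric.
Variable R : rcfType.
Local Notation RC := (real_complex R).

Lemma RC_real (x : R) : RC x \is Num.real.
Proof. by apply/complex_realP; exists x. Qed.

Lemma map_RC_conj m n (X : 'M[R]_(m, n)) :
  map_mx Num.conj (map_mx RC X) = map_mx RC X.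
Proof. by apply/matrixP => i j; rewrite !mxE conj_Creal ?RC_real. Qed.

Lemma realsym_unitary_diag n (A : 'M[R]_n) : A^T = A ->
  exists P (l : 'rV[R[i]]_n), [/\ P \is unitarymx, forall i, l 0 i \is Num.real &
     map_mx RC A = P ^t* *m diag_mx l *m P].
Proof.
move=> A_sym; set Ac := map_mx RC A.
have Ac_herm : Ac \is hermsymmx.
  apply: realsym_hermsym.
    by apply/is_hermitianmxP; rewrite expr0 scale1r map_mx_id // /Ac map_trmx A_sym.
  by apply/mxOverP => i j; rewrite mxE RC_real.
have /orthomx_spectralP Ac_spec := hermitian_normalmx Ac_herm.
exists (spectralmx Ac), (spectral_diag Ac); split.
- exact: spectral_unitarymx.
- by move=> i; have /mxOverP := hermitian_spectral_diag_real Ac_herm; apply.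
- by rewrite -invmx_unitary ?spectral_unitarymx.
Qed.

Lemma char_poly_unitary_diag n (A : 'M[R]_n) P (l : 'rV[R[i]]_n) :
  P \is unitarymx -> (forall i, l 0 i \is Num.real) ->
  map_mx RC A = P ^t* *m diag_mx l *m P ->
  char_poly A = \prod_(x <- [seq complex.Re (l 0 i) | i : 'I_n]) ('X - x%:P).
Proof.
move=> PU l_real eA; apply: (@map_poly_inj _ _ RC).
rewrite map_char_poly eA char_poly_similar ?trCmulmx_unitary //.
rewrite char_poly_trig ?diag_mx_is_trig // rmorph_prod big_map big_enum /=.
apply: eq_bigr => i _; rewrite rmorphB /= map_polyX map_polyC /= mxE eqxx mulr1n.
by rewrite RRe_real.
Qed.

Lemma sym_rank1 n (A : 'M[R]_n) (beta : R) (v : 'cV[R]_n) :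
  A^T = A -> (A + beta *: (v *m v^T))^T = A + beta *: (v *m v^T).
Proof. by move=> A_sym; rewrite linearD linearZ /= A_sym trmx_mul trmxK. Qed.

Lemma map_RC_rank1 n (A : 'M[R]_n) (beta : R) (v : 'cV[R]_n) :
  map_mx RC (A + beta *: (v *m v^T)) =
  map_mx RC A + RC beta *: (map_mx RC v *m (map_mx RC v) ^t*).
Proof. by rewrite map_mxD map_mxZ map_mxM map_trmx map_RC_conj. Qed.

Lemma nlt_row_RC n (a : 'rV[R]_n) t :
  nlt_row (map_mx RC a) (RC t) = #|[set i | a 0 i < t]|.
Proof. by apply: eq_card => i; rewrite !inE mxE ltcR. Qed.

Lemma nle_row_RC n (a : 'rV[R]_n) t :
  nle_row (map_mx RC a) (RC t) = #|[set i | a 0 i <= t]|.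
Proof. by apply: eq_card => i; rewrite !inE mxE lecR. Qed.

Lemma count_Re_lt n (l : 'rV[R[i]]_n) t : (forall i, l 0 i \is Num.real) ->
  count (fun x => x < t) [seq complex.Re (l 0 i) | i : 'I_n] = nlt_row l (RC t).
Proof.
move=> l_real; rewrite /nlt_row count_map -sum1_count -sum1dep_card big_enum_cond /=.
by apply: eq_bigl => i; rewrite -ltcR RRe_real.
Qed.

Lemma count_Re_le n (l : 'rV[R[i]]_n) t : (forall i, l 0 i \is Num.real) ->
  count (fun x => x <= t) [seq complex.Re (l 0 i) | i : 'I_n] = nle_row l (RC t).
Proof.
move=> l_real; rewrite /nle_row count_map -sum1_count -sum1dep_card big_enum_cond /=.
by apply: eq_bigl => i; rewrite -lecR RRe_real.
Qed.

Lemma rank2_update_counts n (d : 'rV[R]_n) (beta1 beta2 : R) (v1 v2 : 'cV[R]_n) :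
  beta1 != 0 -> beta2 != 0 ->
  let M := diag_mx d + beta1 *: (v1 *m v1^T) + beta2 *: (v2 *m v2^T) in
  let p := ((0 < beta1)%R + (0 < beta2)%R)%N in
  let q := ((beta1 < 0)%R + (beta2 < 0)%R)%N in
  exists s : seq R, char_poly M = \prod_(x <- s) ('X - x%:P) /\
  forall t : R,
    [/\ (count (fun x => (x < t)%R) s <= #|[set i | (d 0 i < t)%R]| + q)%N,
        (#|[set i | (d 0 i < t)%R]| <= count (fun x => (x < t)%R) s + p)%N,
        (count (fun x => (x <= t)%R) s <= #|[set i | (d 0 i <= t)%R]| + q)%N &
        (#|[set i | (d 0 i <= t)%R]| <= count (fun x => (x <= t)%R) s + p)%N].
Proof.
move=> beta1_neq0 beta2_neq0 M p q.
set M1 := diag_mx d + beta1 *: (v1 *m v1^T).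
have M1_sym : M1^T = M1 by apply: sym_rank1; rewrite tr_diag_mx.
have [P1 [l1 [P1U l1_real eM1]]] := realsym_unitary_diag M1_sym.
have [P2 [l2 [P2U l2_real eM2]]] := realsym_unitary_diag (sym_rank1 beta2 v2 M1_sym).
set s := [seq complex.Re (l2 0 i) | i : 'I_n]; exists s.
split; first exact: (char_poly_unitary_diag P2U l2_real eM2).
move=> t.
have IU : (1%:M : 'M[R[i]]_n) \is unitarymx.
  by apply/unitarymxP; rewrite trmx1 map_mx1 mulmx1.
have d_real i : (map_mx RC d) 0 i \is Num.real by rewrite mxE RC_real.
have upd1 : P1 ^t* *m diag_mx l1 *m P1 = 1%:M ^t* *m diag_mx (map_mx RC d) *m 1%:M
    + RC beta1 *: (map_mx RC v1 *m (map_mx RC v1) ^t*).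
  by rewrite -eM1 map_RC_rank1 trmx1 map_mx1 mul1mx mulmx1 map_diag_mx.
have upd2 : P2 ^t* *m diag_mx l2 *m P2 = P1 ^t* *m diag_mx l1 *m P1
    + RC beta2 *: (map_mx RC v2 *m (map_mx RC v2) ^t*).
  by rewrite -eM2 -eM1 map_RC_rank1.
have beta_neq0 beta : beta != 0 -> RC beta != 0.
  by move=> beta_neq0; rewrite -(rmorph0 RC) (inj_eq (@complexI R)).
have [lt1 gt1 le1 ge1] := nlt_row_rank1_update IU P1U d_real l1_real
  (RC_real t) (RC_real beta1) (beta_neq0 _ beta1_neq0) upd1.
have [lt2 gt2 le2 ge2] := nlt_row_rank1_update P1U P2U l1_real l2_real
  (RC_real t) (RC_real beta2) (beta_neq0 _ beta2_neq0) upd2.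
have RC_lt0 x : (RC x < 0) = (x < 0) by rewrite -(rmorph0 RC) ltcR.
have RC_gt0 x : (0 < RC x) = (0 < x) by rewrite -(rmorph0 RC) ltcR.
rewrite !RC_lt0 !RC_gt0 nlt_row_RC nle_row_RC in lt1 gt1 le1 ge1.
rewrite !RC_lt0 !RC_gt0 -count_Re_lt // -count_Re_le // in lt2 gt2 le2 ge2.
rewrite /p /q !addnA; split.
- by apply: leq_trans lt2 _; rewrite leq_add2r.
- by apply: leq_trans gt1 _; rewrite -addnA (addnC (0 < beta1)%R) addnA leq_add2r.
- by apply: leq_trans le2 _; rewrite leq_add2r.
- by apply: leq_trans ge1 _; rewrite -addnA (addnC (0 < beta1)%R) addnA leq_add2r.
Qed.

End RealSymmetric.

Lemma card_ord_ltn n p : (p <= n)%N -> #|[set i : 'I_n | (i < p)%N]| = p.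
Proof.
move=> pn; rewrite -sum1dep_card -(big_mkord (fun i => (i < p)%N) (fun=> 1%N)).
rewrite (eq_bigl (fun i => true && (i < p)%N)) // -big_nat_widen //.
by rewrite sum_nat_const_nat muln1 subn0.
Qed.

Lemma count_lt_split (R : realFieldType) (s : seq R) a b : a < b ->
  count (fun x => x < b) s =
  (count (fun x => (x <= a)%R) s + count (fun x => (a < x < b)%R) s)%N.
Proof.
move=> ab; elim: s => //= x s ->.
by case: (leP x a) => [xa | ax] /=; [rewrite (le_lt_trans xa ab) | case: (x < b)]; lia.
Qed.

Section IncreasingRow.
Variables (R : realFieldType) (n : nat) (d : 'rV[R]_n.+1).
Hypothesis d_incr : forall i i' : 'I_n.+1, (i < i')%N -> d 0 i < d 0 i'.

Lemma row_ltE i i' : (d 0 i < d 0 i') = (i < i')%N.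
Proof.
case: (ltngtP i i') => [ii' | i'i | /val_inj ->]; first exact: d_incr.
  by apply/negbTE; rewrite -leNgt ltW // d_incr.
by rewrite ltxx.
Qed.

Lemma row_leE i i' : (d 0 i <= d 0 i') = (i <= i')%N.
Proof. by rewrite leNgt row_ltE -leqNgt. Qed.

Lemma card_row_lt i : #|[set i' | d 0 i' < d 0 i]| = i.
Proof.
rewrite -[RHS](@card_ord_ltn n.+1) 1?ltnW //.
by apply: eq_card => i'; rewrite !inE row_ltE.
Qed.

Lemma card_row_le i : #|[set i' | d 0 i' <= d 0 i]| = i.+1.
Proof.
rewrite -[RHS](@card_ord_ltn n.+1) //.
by apply: eq_card => i'; rewrite !inE row_leE.
Qed.

Lemma in_I_inord j k x : (forall i, x != d 0 i) -> (j + k < n.+1)%N ->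
  in_I d j k x = (d 0 (inord j) < x < d 0 (inord (j + k))).
Proof.
move=> x_neq_d jk.
have ej : (inord j : 'I_n.+1) = j :> nat by rewrite inordK //; lia.
have ejk : (inord (j + k) : 'I_n.+1) = (j + k)%N :> nat by rewrite inordK.
apply/idP/idP.
  case/existsP => i /existsP [i'] /and5P [/eqP ei' ji ik xi xi'].
  rewrite (le_lt_trans _ xi) ?(lt_le_trans xi') // row_leE ?ej ?ejk //.
  by rewrite ei'.
case/andP => jx xk.
have [i0 i0x i0_max] := @arg_maxnP _ (inord j) (fun i => d 0 i < x) val jx.
have i0_lt : (i0 < j + k)%N by rewrite -ejk -row_ltE (lt_trans i0x xk).
have i1_lt : (i0.+1 < n.+1)%N by lia.
have e1 : val (inord i0.+1 : 'I_n.+1) = i0.+1 := inordK i1_lt.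
have ji0 : (j <= i0)%N by rewrite -ej; exact: i0_max.
apply/existsP; exists i0; apply/existsP; exists (inord i0.+1).
rewrite e1 eqxx ji0 i0_lt i0x /=.
rewrite real_ltNge ?num_real // le_eqVlt eq_sym (negbTE (x_neq_d _)) /=.
by apply/negP => /i0_max /=; rewrite e1; lia.
Qed.

Variables (s : seq R) (p q : nat).
Hypotheses (pq2 : (p + q)%N = 2) (s_neq_d : forall x, x \in s -> forall i, x != d 0 i).
Hypothesis count_bounds : forall t : R,
  [/\ (count (fun x => (x < t)%R) s <= #|[set i | (d 0 i < t)%R]| + q)%N,
      (#|[set i | (d 0 i < t)%R]| <= count (fun x => (x < t)%R) s + p)%N,
      (count (fun x => (x <= t)%R) s <= #|[set i | (d 0 i <= t)%R]| + q)%N &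
      (#|[set i | (d 0 i <= t)%R]| <= count (fun x => (x <= t)%R) s + p)%N].

Lemma count_le_row (i : 'I_n.+1) :
  count (fun x => x <= d 0 i) s = count (fun x => x < d 0 i) s.
Proof.
by apply: eq_in_count => x /s_neq_d /(_ i) x_neq; rewrite le_eqVlt (negbTE x_neq).
Qed.

(* As [s] avoids every [d i], counting below and at most [d i] agree, so the
   better of the strict and non-strict bounds is available at each end. *)
Lemma count_between_rows (i i' : 'I_n.+1) : (i < i')%N ->
  ((i' - i).-1 <= count (fun x => (d 0 i < x < d 0 i')%R) s <= (i' - i).+1)%N.
Proof.
move=> ii'.
have := count_lt_split s (d_incr ii'); have := count_le_row i; have := count_le_row i'.
have [+ _ _ +] := count_bounds (d 0 i'); have [+ _ _ +] := count_bounds (d 0 i).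
rewrite !card_row_lt !card_row_le; lia.
Qed.

End IncreasingRow.

Lemma sign_count (R : realDomainType) (x : R) :
  x != 0 -> ((0 < x)%R + (x < 0)%R)%N = 1%N.
Proof. by rewrite neq_lt => /orP [] x0; rewrite x0 ?(lt_gtF x0). Qed.

Theorem lemma1 (R : rcfType) (m : nat) (hm : (2 <= m)%N)
  (d : 'rV[R]_m) (hd : forall i i' : 'I_m, (val i < val i')%N -> d 0 i < d 0 i')
  (beta1 beta2 : R) (hb1 : beta1 != 0) (hb2 : beta2 != 0)
  (v1 v2 : 'cV[R]_m) (J1 J2 J3 : {set 'I_m})
  (hJ12 : [disjoint J1 & J2]) (hJ13 : [disjoint J1 & J3])
  (hJ23 : [disjoint J2 & J3]) (hJ : J1 :|: J2 :|: J3 = [set: 'I_m])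
  (hv1 : forall i, i \in J3 -> v1 i 0 = 0)
  (hv2 : forall i, i \in J1 -> v2 i 0 = 0) :
  let M := diag_mx d + beta1 *: (v1 *m v1^T) + beta2 *: (v2 *m v2^T) in
  (forall i : 'I_m, ~~ eigenvalue M (d 0 i)) ->
  exists s : seq R,
    char_poly M = \prod_(x <- s) ('X - x%:P) /\
    (forall j k : nat, (1 <= k)%N -> (j + k < m)%N ->
       (k.-1 <= count (in_I d j k) s <= k.+1)%N) /\
    (forall i i' : 'I_m, val i' = (val i).+1 ->
       (count (fun x : R => (d 0 i < x < d 0 i')%R) s <= 2)%N).
Proof.
move=> M no_eig_d; destruct m as [|n]; first by [].
have [s [charM bounds]] := rank2_update_counts d v1 v2 hb1 hb2.
have s_neq_d x : x \in s -> forall i, x != d 0 i.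
  move=> xs i; apply: contraNneq (no_eig_d i) => <-.
  by rewrite eigenvalue_root_char charM root_prod_XsubC.
have pq2 : ((0 < beta1)%R + (0 < beta2)%R + ((beta1 < 0)%R + (beta2 < 0)%R))%N = 2.
  by rewrite addnACA !sign_count.
have count_between := count_between_rows hd pq2 s_neq_d bounds.
exists s; split=> //; split.
- move=> j k k_gt0 jk.
  rewrite (eq_in_count (fun x xs => in_I_inord hd (s_neq_d x xs) jk)).
  have j_lt : (j < n.+1)%N by lia.
  have := count_between (inord j) (inord (j + k)).
  by rewrite !inordK // addKn; apply; lia.
- move=> i i' ei'; have := count_between i i'.
  by rewrite ei' subSnn => /(_ (ltnSn _)) /andP [].
Qed.
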